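(* Let $C_{11}(\{1,3\})$ be the circulant graph with vertex set $\mathbb Z_{11}$ in which $i$ and $j$ are adjacent iff $i-j\equiv \pm1$ or $\pm 3 \pmod{11}$, and let $G_{22}$ be the complement of the line graph $L(C_{11}(\{1,3\}))$. Then $G_{22}$ is not co-triangle, i.e., $L(C_{11}(\{1,3\}))$ is not a triangle graph.
   Context: A graph $G$ is triangle if for every maximal stable set $S$ of $G$ and every edge $uv$ of $G$ with $u,v\notin S$, there is $s\in S$ adjacent to both $u$ and $v$. The line graph $L(H)$ has vertex set $E(H)$, with two edges adjacent iff they share an endpoint. *)

From mathcomp Require Import all_boot all_order all_algebra.
Set Implicit Arguments. Unset Strict Implicit. Unset Printing Implicit Defensive.
Import GRing.Theory.

(* Graphs: a finite simple graph is given by a vertex finType V and an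
   adjacency relation adj : rel V (assumed symmetric and irreflexive). *)

Section Graphs.
Variables (V : finType) (adj : rel V).

Definition stable (S : {set V}) : Prop :=
  forall u v, u \in S -> v \in S -> ~~ adj u v.

Definition maximal_stable (S : {set V}) : Prop :=
  stable S /\ forall T : {set V}, S \subset T -> stable T -> T = S.

Definition triangle_graph : Prop :=
  forall S : {set V}, maximal_stable S ->
  forall u v, adj u v -> u \notin S -> v \notin S ->
  exists s, [/\ s \in S, adj s u & adj s v].

Definition is_edge (E : {set V}) : bool :=
  [exists x, exists y, [&& x != y, adj x y & E == [set x; y]]].

End Graphs.

Definition line_vertex (V : finType) (adj : rel V) :=
  {E : {set V} | is_edge adj E}.

Definition line_adj (V : finType) (adj : rel V) : rel (line_vertex adj) :=
  fun e f => (e != f) && ~~ [disjoint val e & val f].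

Arguments line_adj {V} adj.
Arguments triangle_graph {V} adj.

Definition C11_13_adj : rel 'Z_11 :=
  fun i j => ((i - j \in [:: 1; -1; 3%:R; - 3%:R])%R).

From mathcomp Require Import all_boot all_order all_algebra.
Set Implicit Arguments.
Unset Strict Implicit.
Unset Printing Implicit Defensive.
Import GRing.Theory.

(** The edges {1,2}, {3,4}, ..., {9,10} of C_11({1,3}) form a matching M
   missing only the vertex 0. Seen in the line graph, M is a stable set, and
   it is maximal because every edge has an endpoint other than 0 and hence
   meets M. The edges {0,1} and {0,3} are adjacent in the line graph and lie
   outside M, but an edge of M meeting both would have to contain 1 and 3,
   since M avoids 0; no edge of M does. *)

Section StableSets.
Variables (V : finType) (adj : rel V).

Lemma dominating_stable_maximal (S : {set V}) :
  stable adj S -> (forall t, t \notin S -> exists2 s, s \in S & adj s t) ->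
  maximal_stable adj S.
Proof.
move=> stS domS; split=> // T sST stT; apply/eqP; rewrite eqEsubset sST andbT.
apply/subsetP => t tT; apply/negPn/negP => /domS[s sS].
exact/negP/(stT s t (subsetP sST s sS) tT).
Qed.

End StableSets.

Section LineGraphs.
Variables (V : finType) (adj : rel V).
Local Notation edge := (line_vertex adj).
Local Notation ladj := (line_adj adj).

Lemma is_edge2 x y : x != y -> adj x y -> is_edge adj [set x; y].
Proof.
by move=> xy axy; apply/existsP; exists x; apply/existsP; exists y; rewrite xy axy eqxx.
Qed.

Lemma line_adjP (e f : edge) :
  reflect (e != f /\ exists2 x, x \in val e & x \in val f) (ladj e f).
Proof.
rewrite /line_adj -setI_eq0; apply: (iffP andP) => -[ef].
  by case/set0Pn => x /setIP[xe xf]; split=> //; exists x.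
by case=> x xe xf; split=> //; apply/set0Pn; exists x; apply/setIP.
Qed.

Lemma edge_other_end (e : edge) v : exists2 w, w \in val e & w != v.
Proof.
have /existsP[x /existsP[y /and3P[xy _ /eqP ->]]] := valP e.
case: (eqVneq x v) => [<-|xv]; first by exists y; rewrite ?inE ?eqxx ?orbT // eq_sym.
by exists x; rewrite ?inE ?eqxx.
Qed.

Lemma line_dominating_of_cover (M : {set edge}) v0 :
  (forall w, w != v0 -> exists2 s, s \in M & w \in val s) ->
  forall t, t \notin M -> exists2 s, s \in M & ladj s t.
Proof.
move=> coverM t tM; have [w wt wv0] := edge_other_end t v0.
have [s sM ws] := coverM w wv0; exists s => //.
apply/line_adjP; split; last by exists w.
by apply: contraNneq tM => <-.
Qed.

Lemma line_not_triangle (M : {set edge}) v0 a b (e f : edge) :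
  maximal_stable ladj M ->
  (forall s, s \in M -> v0 \notin val s) ->
  (forall s, s \in M -> ~~ ((a \in val s) && (b \in val s))) ->
  val e = [set v0; a] -> val f = [set v0; b] -> e != f ->
  ~ triangle_graph ladj.
Proof.
move=> maxM v0M abM ve vf ef tri.
have notM (g : edge) : v0 \in val g -> g \notin M by apply: contraL => /v0M/negPf->.
have v0e : v0 \in val e by rewrite ve !inE eqxx.
have v0f : v0 \in val f by rewrite vf !inE eqxx.
have ladj_ef : ladj e f by apply/line_adjP; split=> //; exists v0.
have [s [sM /line_adjP[_ [x xs xe]] /line_adjP[_ [y ys yf]]]] :=
  tri M maxM e f ladj_ef (notM e v0e) (notM f v0f).
have meets (g : edge) c z : val g = [set v0; c] -> z \in val g -> z \in val s ->
    c \in val s.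
  by move=> ->; rewrite !inE => /orP[/eqP->|/eqP-> //]; rewrite (negPf (v0M s sM)).
by move: (abM s sM); rewrite (meets e a x) ?(meets f b y).
Qed.

End LineGraphs.

Lemma Z11_val_add1 (x : 'Z_11) : odd x -> val (x + 1)%R = x.+1.
Proof.
move=> ox; have lt_x10 : x < 10.
  by rewrite ltn_neqAle -ltnS ltn_ord andbT; apply: contraTneq ox => ->.
by rewrite /= addn1 modn_small.
Qed.

Lemma Z11_odd_pairs_meet (x y w : 'Z_11) : odd x -> odd y ->
  w \in [set x; x + 1]%R -> w \in [set y; y + 1]%R -> x = y.
Proof.
move=> ox oy; rewrite !inE => /orP[]/eqP-> /orP[]/eqP/(congr1 val);
  rewrite ?Z11_val_add1 // => E.
- exact: val_inj.
- by move: ox; rewrite E /= oy.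
- by move: oy; rewrite -E /= ox.
- by apply: val_inj; case: E.
Qed.

Lemma Z11_odd_pair_cover (w : 'Z_11) : w != 0%R ->
  exists2 x : 'Z_11, odd x & w \in [set x; x + 1]%R.
Proof.
move=> w0; case ow: (odd w); first by exists w; rewrite ?inE ?eqxx.
have w_gt0 : 0 < w by rewrite lt0n; apply: contraNneq w0 => E; apply/eqP/val_inj.
have lt_w1 : w.-1 < 11 := leq_ltn_trans (leq_pred w) (ltn_ord w).
have ox : odd (inZp w.-1 : 'Z_11).
  by rewrite /= modn_small //; move: ow; rewrite -(prednK w_gt0) /= => /negbFE.
exists (inZp w.-1) => //; rewrite !inE; apply/orP; right; apply/eqP/val_inj.
by rewrite Z11_val_add1 //= modn_small // prednK.
Qed.

Lemma C11_13_adj_succ (x : 'Z_11) : C11_13_adj x (x + 1)%R.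
Proof. by rewrite /C11_13_adj opprD addrA subrr add0r !inE eqxx orbT. Qed.

Lemma odd_pair_edge (x : 'Z_11) : odd x -> is_edge C11_13_adj [set x; x + 1]%R.
Proof.
move=> ox; apply: is_edge2 (C11_13_adj_succ x).
by apply/eqP => /(congr1 val); rewrite Z11_val_add1 //; apply: n_Sn.
Qed.

Definition odd_pair_matching : {set line_vertex C11_13_adj} :=
  [set e | [exists x : 'Z_11, odd x && (val e == [set x; x + 1]%R)]].

Lemma odd_pair_matchingP (s : line_vertex C11_13_adj) :
  reflect (exists2 x : 'Z_11, odd x & val s = [set x; x + 1]%R)
          (s \in odd_pair_matching).
Proof.
rewrite inE; apply: (iffP existsP) => [[x /andP[ox /eqP]]|[x ox sx]]; first by exists x.
by exists x; rewrite ox sx eqxx.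
Qed.

Lemma odd_pair_matching_stable : stable (line_adj C11_13_adj) odd_pair_matching.
Proof.
move=> s t /odd_pair_matchingP[x ox sx] /odd_pair_matchingP[y oy ty].
apply/line_adjP => -[/eqP st [w]]; rewrite sx ty => wx wy; apply: st; apply: val_inj.
by rewrite sx ty (Z11_odd_pairs_meet ox oy wx wy).
Qed.

Lemma odd_pair_matching_cover (w : 'Z_11) : w != 0%R ->
  exists2 s, s \in odd_pair_matching & w \in val s.
Proof.
case/Z11_odd_pair_cover=> x ox wx.
exists (exist (is_edge C11_13_adj) _ (odd_pair_edge ox)) => //.
by apply/odd_pair_matchingP; exists x.
Qed.

Lemma odd_pair_matching_maximal :
  maximal_stable (line_adj C11_13_adj) odd_pair_matching.
Proof.
apply: dominating_stable_maximal; first exact: odd_pair_matching_stable.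
exact: line_dominating_of_cover odd_pair_matching_cover.
Qed.

Lemma odd_pair_matching_avoid0 s :
  s \in odd_pair_matching -> (0 : 'Z_11)%R \notin val s.
Proof.
case/odd_pair_matchingP=> x ox ->.
have x0 : (0 : 'Z_11)%R != x by apply: contraTneq ox => <-.
have x10 : (0 : 'Z_11)%R != (x + 1)%R.
  by apply/eqP => /(congr1 val); rewrite Z11_val_add1 //; apply: O_S.
by rewrite !inE negb_or x0 x10.
Qed.

Lemma odd_pair_matching_not_13 s : s \in odd_pair_matching ->
  ~~ (((1 : 'Z_11)%R \in val s) && ((3%:R : 'Z_11)%R \in val s)).
Proof.
case/odd_pair_matchingP=> x ox ->; apply/andP => -[x1 x3].
have one_pair : (1 : 'Z_11)%R \in [set 1; 1 + 1]%R by rewrite !inE eqxx.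
have three_pair : (3%:R : 'Z_11)%R \in [set 3%:R; 3%:R + 1]%R by rewrite !inE eqxx.
have := Z11_odd_pairs_meet (y := 1%R) ox isT x1 one_pair.
by move: (Z11_odd_pairs_meet (y := 3%:R%R) ox isT x3 three_pair) => ->.
Qed.

Theorem proposition37 : ~ triangle_graph (line_adj C11_13_adj).
Proof.
have e01 : is_edge C11_13_adj [set 0; 1]%R by apply: is_edge2.
have e03 : is_edge C11_13_adj [set 0; 3%:R]%R by apply: is_edge2.
pose e : line_vertex C11_13_adj := exist (is_edge C11_13_adj) _ e01.
pose f : line_vertex C11_13_adj := exist (is_edge C11_13_adj) _ e03.
apply: (line_not_triangle (e := e) (f := f) odd_pair_matching_maximal
  odd_pair_matching_avoid0 odd_pair_matching_not_13) => //.
by apply/eqP => /(congr1 val)/setP/(_ 1%R); rewrite !inE.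
Qed.
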